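(* For $k\ge2$ the following hold (with the convention $\Gamma_{k,r}(d,j)=0$ if $r<0$, $r>k$ or $d>k$). For $d\ge1$: $\Gamma_{k,r}(d,1)=\Gamma_{k-1,r-1}(d,2)+\Gamma_{k-1,r}(d-1,1)+\Gamma_{k-1,r}(d,2)$, $\Gamma_{k,r}(d,2)=\Gamma_{k-1,r-1}(d,1)+2\Gamma_{k-1,r}(d+1,2)$, $\Gamma_{k,r}(d,3)=\Gamma_{k-1,r-1}(d,4)+2\Gamma_{k-1,r}(d+1,3)$, $\Gamma_{k,r}(d,4)=\Gamma_{k-1,r-1}(d,3)+\Gamma_{k-1,r}(d-1,4)+\Gamma_{k-1,r}(d,3)$. For $d=0$: $\Gamma_{k,r}(0,1)=\Gamma_{k-1,r-1}(0,2)+2\Gamma_{k-1,r}(1,3)$, $\Gamma_{k,r}(0,2)=\Gamma_{k-1,r-1}(0,1)+2\Gamma_{k-1,r}(1,2)$, $\Gamma_{k,r}(0,3)=\Gamma_{k-1,r-1}(0,4)+2\Gamma_{k-1,r}(1,3)$, $\Gamma_{k,r}(0,4)=\Gamma_{k-1,r-1}(0,3)+2\Gamma_{k-1,r}(1,2)$.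
   Context: $\mathcal B$ is the $2$-regular Bethe lattice (infinite tree, every node of degree $3$), a metric graph with edges of length $1$; $m(B)$ is the midpoint of edge $B$, $\mathrm{dist}$ the path distance. Each edge has two orientations, $-\vec C$ the opposite of $\vec C$; $\vec C\to\vec D$ means the terminal node of $\vec C$ is the initial node of $\vec D$. A path of length $k\ge1$ from $\vec A$ to $\vec B$ is a tuple $(\vec C_0,\dots,\vec C_k)$ with $\vec C_0=\vec A$, $\vec C_k=\vec B$ and $\vec C_i\to\vec C_{i+1}$ for all $i$; an inversion is an index $i$ with $\vec C_{i+1}=-\vec C_i$. Types of $(\vec A,\vec B)$ with $d=\mathrm{dist}(m(A),m(B))\ge1$: $\vec A$ points toward $B$ if its terminal node lies on the geodesic from $m(A)$ to $m(B)$; $\vec B$ points away from $A$ if its initial node lies on that geodesic. Type 1: $\vec A$ toward, $\vec B$ away; type 2: $\vec A$ toward, $\vec B$ toward $A$; type 3: $\vec A$ away from $B$, $\vec B$ toward $A$; type 4: $\vec A$ away, $\vec B$ away. For $d=0$, types 1 and 3 mean $\vec B=\vec A$, types 2 and 4 mean $\vec B=-\vec A$. $\Gamma_{k,r}(d,j)$ is the number of paths of length $k$ with exactly $r$ inversions from $\vec A$ to $\vec B$, where $(\vec A,\vec B)$ is any pair at distance $d$ of type $j$ (this number depends only on $k,r,d,j$). *)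

(* Model of the 2-regular Bethe lattice (3-regular tree):
   the Cayley graph of Z/2 * Z/2 * Z/2, vertices = reduced words over 'I_3
   (no two consecutive letters equal), edges {w, w.g}. *)
From HB Require Import structures.
From mathcomp Require Import all_boot all_order all_algebra.
From Stdlib Require Import ClassicalEpsilon.
Set Implicit Arguments. Unset Strict Implicit. Unset Printing Implicit Defensive.

Definition vert := seq 'I_3.
Definition reduced (w : vert) : bool := sorted (fun a b : 'I_3 => a != b) w.

Definition vmul (w : vert) (g : 'I_3) : vert :=
  match rev w with
  | g' :: t => if g' == g then rev t else rcons w g
  | [::] => [:: g]
  end.

Fixpoint lcp (u v : vert) : nat :=
  match u, v with
  | x :: u', y :: v' => if x == y then (lcp u' v').+1 else 0
  | _, _ => 0
  end.
Definition vdist (u v : vert) : nat := size u + size v - 2 * lcp u v.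

(* oriented edges: (initial node w, colour g), from w to vmul w g *)
Definition oedge := (vert * 'I_3)%type.
Definition valid (C : oedge) : bool := reduced C.1.
Definition init (C : oedge) : vert := C.1.
Definition term (C : oedge) : vert := vmul C.1 C.2.
Definition opp (C : oedge) : oedge := (term C, C.2).
Definition same_edge (A B : oedge) : bool := (A == B) || (A == opp B).

(* Distances in the metric graph (edges of length 1).  Doubled quantities
   are used to stay in nat. *)
Definition middist (A B : oedge) : nat :=
  if same_edge A B then 0
  else (minn (minn (vdist (init A) (init B)) (vdist (init A) (term B)))
             (minn (vdist (term A) (init B)) (vdist (term A) (term B)))).+1.
(* 2 * dist(m(A), v) for a node v *)
Definition d2mv (A : oedge) (v : vert) : nat :=
  (2 * minn (vdist (init A) v) (vdist (term A) v)).+1.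
Definition on_geod (A B : oedge) (v : vert) : bool :=
  d2mv A v + d2mv B v == 2 * middist A B.

Definition has_type (d j : nat) (A B : oedge) : bool :=
  [&& valid A, valid B, middist A B == d &
  if d == 0 then
    (if (j == 1) || (j == 3) then B == A
     else if (j == 2) || (j == 4) then B == opp A else false)
  else match j with
    | 1 => on_geod A B (term A) && on_geod A B (init B)   (* A toward, B away *)
    | 2 => on_geod A B (term A) && on_geod A B (term B)   (* A toward, B toward *)
    | 3 => on_geod A B (init A) && on_geod A B (term B)   (* A away, B toward *)
    | 4 => on_geod A B (init A) && on_geod A B (init B)   (* A away, B away *)
    | _ => false
    end].

Definition arrow (C D : oedge) : bool := init D == term C.

(* Since
   C -> D iff D = (term C, D.2), paths of length k starting at A are in
   bijection with colour sequences h of length k (see walk_path). *)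
Fixpoint walk (A : oedge) (hs : seq 'I_3) : seq oedge :=
  A :: (if hs is h :: t then walk (term A, h) t else [::]).

Lemma walk_path A hs : path arrow A (behead (walk A hs)).
Proof.
elim: hs A => [|h t IH] A //=.
have := IH (term A, h).
by case: t {IH} => [|h' t'] /= => [_|->]; rewrite /arrow /init /= eqxx.
Qed.

Definition inversions (s : seq oedge) : nat :=
  count (fun p : oedge * oedge => p.2 == opp p.1) (zip s (behead s)).

Definition npaths (k r : nat) (A B : oedge) : nat :=
  #|[pred t : k.-tuple 'I_3 |
      let s := walk A t in (last A s == B) && (inversions s == r)]|.

Definition oedge0 : oedge := ([::], ord0).

Definition Gamma (k : nat) (r : int) (d j : nat) : nat :=
  let p := epsilon (inhabits (oedge0, oedge0))
                   (fun p : oedge * oedge => has_type d j p.1 p.2) in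
  match r with
  | Posz r' => npaths k r' p.1 p.2
  | Negz _ => 0
  end.

(* Left multiplication by a letter is an automorphism of the tree: on reduced words it
   preserves [vdist] and commutes with right multiplication by a letter.  Hence the type of
   a pair of oriented edges is invariant under translation, and we may move the initial
   node of B to the root.  Splitting a path according to its last edge, the paths of length
   k from A to B are the paths of length k - 1 from A to one of the three edges C -> B, with
   one more inversion when C = -B.  The pair (A, -B) has type (d, flip_type j); in the root
   frame, where A joins the words p and p·g, the types of the pairs (A, C) for the two
   other edges C are read off from the length and the first letter of p·g.  By induction on
   k, the number of paths therefore depends only on the type and obeys the recursion
   [Gamma_rec], whose first step is the statement. *)

From mathcomp Require Import all_boot all_order all_algebra zify.
From Stdlib Require Import ClassicalEpsilon.

Set Implicit Arguments.
Unset Strict Implicit.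
Unset Printing Implicit Defensive.
Import GRing.Theory.

(** * Reduced words and left multiplication *)

Lemma reduced_cons2 (a b : 'I_3) (w : vert) :
  reduced [:: a, b & w] = (a != b) && reduced (b :: w).
Proof. by []. Qed.

Lemma reduced_rcons2 (w : vert) (a b : 'I_3) :
  reduced (rcons (rcons w a) b) = (a != b) && reduced (rcons w a).
Proof.
by rewrite /reduced; case: w => [|c w] /=; rewrite ?andbT // !rcons_path last_rcons andbC.
Qed.

Lemma vmul_nil (h : 'I_3) : vmul [::] h = [:: h].
Proof. by []. Qed.

Lemma vmul_rcons (w : vert) (a h : 'I_3) :
  vmul (rcons w a) h = if a == h then w else rcons (rcons w a) h.
Proof. by rewrite /vmul rev_rcons revK. Qed.

Lemma vmulK (w : vert) (h : 'I_3) : reduced w -> vmul (vmul w h) h = w.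
Proof.
case/lastP: w => [|w a]; first by rewrite /vmul /= eqxx.
rewrite vmul_rcons; case: (eqVneq a h) => [->|_]; last by rewrite vmul_rcons eqxx.
case/lastP: w => [|w b] //; rewrite reduced_rcons2 => /andP[hbh _].
by rewrite vmul_rcons (negbTE hbh).
Qed.

Lemma vmul_eq (u v : vert) h : reduced u -> reduced v -> (vmul u h == v) = (u == vmul v h).
Proof. by move=> hu hv; apply/eqP/eqP => [<-|->]; rewrite vmulK. Qed.

Lemma reduced_vmul (w : vert) (h : 'I_3) : reduced w -> reduced (vmul w h).
Proof.
case/lastP: w => [|w a] //; rewrite vmul_rcons; case: eqP => [_|/eqP nah hw].
  by case/lastP: w => [|w b] //; rewrite reduced_rcons2 => /andP[].
by rewrite reduced_rcons2 nah.
Qed.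

Definition lmul (g : 'I_3) (w : vert) : vert :=
  if w is a :: t then (if a == g then t else g :: w) else [:: g].

Lemma reduced_lmul g w : reduced w -> reduced (lmul g w).
Proof.
case: w => [|a w] //=; case: (eqVneq a g) => [_|nag] hw; first exact: path_sorted hw.
by rewrite /reduced /= eq_sym nag.
Qed.

Lemma lmulK g w : reduced w -> lmul g (lmul g w) = w.
Proof.
case: w => [|a w] /=; first by rewrite eqxx.
case: (eqVneq a g) => [->|_] /=; last by rewrite eqxx.
by case: w => [|b w] //= /andP[]; rewrite eq_sym => /negbTE ->.
Qed.

Lemma lmul_push g w : ohead w != Some g -> lmul g w = g :: w.
Proof. by case: w => [|a w] //=; case: (eqVneq a g) => [->|]; rewrite ?eqxx. Qed.

Lemma ohead_reduced g w : reduced (g :: w) -> ohead w != Some g.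
Proof. by case: w => [|a w] //= /andP[]; rewrite eq_sym. Qed.

Lemma lmul_vmul g w h : lmul g (vmul w h) = vmul (lmul g w) h.
Proof.
case: w => [|a w]; first by rewrite /vmul /= eq_sym; case: eqP.
case/lastP: w => [|w l].
  rewrite /vmul /=; case: (eqVneq a g) => [<-|nag]; case: (eqVneq a h) => [<-|nah] //=;
    by rewrite ?eqxx // (negbTE nag) (negbTE nah).
rewrite -rcons_cons vmul_rcons; case: (eqVneq l h) => [->|nlh] /=;
  by case: (eqVneq a g) => _; rewrite -?rcons_cons vmul_rcons ?eqxx ?(negbTE nlh).
Qed.

Lemma foldr_lmul_vmul (x w : vert) h : foldr lmul (vmul w h) x = vmul (foldr lmul w x) h.
Proof. by elim: x => //= g x ->; rewrite lmul_vmul. Qed.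

Lemma foldr_lmul_rev (w : vert) : foldr lmul w (rev w) = [::].
Proof. by elim: w => //= a w IH; rewrite rev_cons -cats1 foldr_cat /= eqxx. Qed.

Lemma lcp_refl (u : vert) : lcp u u = size u.
Proof. by elim: u => //= a u ->; rewrite eqxx. Qed.

Lemma lcpC (u v : vert) : lcp u v = lcp v u.
Proof. by elim: u v => [|a u IH] [|b v] //=; rewrite eq_sym IH. Qed.

Lemma lcp0r (u : vert) : lcp u [::] = 0.
Proof. by case: u. Qed.

Lemma lcp_rcons (u : vert) a : lcp u (rcons u a) = size u.
Proof. by elim: u => //= b u ->; rewrite eqxx. Qed.

Lemma vdistC (u v : vert) : vdist u v = vdist v u.
Proof. by rewrite /vdist lcpC addnC. Qed.

Lemma vdist_refl (u : vert) : vdist u u = 0.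
Proof. by rewrite /vdist lcp_refl addnn -mul2n subnn. Qed.

Lemma vdist0 (u : vert) : vdist [::] u = size u.
Proof. by rewrite /vdist /= muln0 subn0. Qed.

Lemma vdist_cons (a : 'I_3) (u v : vert) : vdist (a :: u) (a :: v) = vdist u v.
Proof. rewrite /vdist /= eqxx; lia. Qed.

Lemma vdist_swap (a : 'I_3) (u v : vert) : ohead u != Some a -> ohead v != Some a ->
  vdist u (a :: v) = vdist (a :: u) v.
Proof.
move=> hu hv; have lcp0 (w w' : vert) : ohead w != Some a -> lcp w (a :: w') = 0.
  by case: w => [|b w] //=; case: (eqVneq b a) => [->|]; rewrite ?eqxx.
by rewrite /vdist lcp0 // lcpC lcp0 //=; lia.
Qed.

Lemma vdist_lmul g u v : reduced u -> reduced v ->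
  vdist (lmul g u) (lmul g v) = vdist u v.
Proof.
have [ug|ug] := eqVneq (ohead u) (Some g); have [vg|vg] := eqVneq (ohead v) (Some g).
- case: u ug => [|a u] // [->]; case: v vg => [|b v] // [->].
  by move=> /ohead_reduced hu /ohead_reduced hv; rewrite /= eqxx vdist_cons.
- case: u ug => [|a u] // [->] /ohead_reduced hu _.
  by rewrite (lmul_push vg) /= eqxx vdist_swap.
- case: v vg => [|b v] // [->] _ /ohead_reduced hv.
  by rewrite (lmul_push ug) /= eqxx -vdist_swap.
- by rewrite (lmul_push ug) (lmul_push vg) vdist_cons.
Qed.

(** * Oriented edges and translations *)

Lemma valid_term C : valid C -> reduced (term C).
Proof. exact: reduced_vmul. Qed.

Lemma valid_opp C : valid C -> valid (opp C).
Proof. exact: valid_term. Qed.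

Lemma term_opp B : valid B -> term (opp B) = init B.
Proof. exact: vmulK. Qed.

Lemma oppK B : valid B -> opp (opp B) = B.
Proof. by case: B => w h hw; rewrite /opp term_opp. Qed.

Lemma eq_opp A B : valid A -> valid B -> (opp A == opp B) = (A == B).
Proof. by move=> hA hB; apply/eqP/eqP => [/(congr1 opp)|->]; rewrite ?oppK. Qed.

Lemma eq_opp_sym A B : valid A -> valid B -> (opp A == B) = (A == opp B).
Proof. by move=> hA hB; apply/eqP/eqP => [<-|->]; rewrite oppK. Qed.

Lemma opp_neq A : valid A -> (opp A == A) = false.
Proof.
case: A => w g hw; apply/negbTE; rewrite /opp /term /= xpair_eqE eqxx andbT.
apply/eqP => /(congr1 size); case/lastP: w hw => [|w a] //; rewrite vmul_rcons.
by case: eqP => _ _; rewrite !size_rcons; lia.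
Qed.

Definition edge_to (v : vert) (c : 'I_3) : oedge := (vmul v c, c).

Lemma term_edge_to v c : reduced v -> term (edge_to v c) = v.
Proof. exact: vmulK. Qed.

Lemma edge_to_init B : edge_to (init B) B.2 = opp B.
Proof. by []. Qed.

Definition ltrans (g : 'I_3) (C : oedge) : oedge := (lmul g C.1, C.2).

Lemma valid_ltrans g C : valid C -> valid (ltrans g C).
Proof. exact: reduced_lmul. Qed.

Lemma init_ltrans g C : init (ltrans g C) = lmul g (init C).
Proof. by []. Qed.

Lemma term_ltrans g C : term (ltrans g C) = lmul g (term C).
Proof. by rewrite /term lmul_vmul. Qed.

Lemma opp_ltrans g C : opp (ltrans g C) = ltrans g (opp C).
Proof. by rewrite /opp term_ltrans. Qed.

Lemma eq_ltrans g C D : valid C -> valid D -> (ltrans g C == ltrans g D) = (C == D).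
Proof.
case: C D => [u h] [v h'] hu hv; rewrite /ltrans !xpair_eqE /=.
by congr (_ && _); apply/eqP/eqP => [/(congr1 (lmul g))|->]; rewrite ?lmulK.
Qed.

Lemma same_edge_ltrans g A B : valid A -> valid B ->
  same_edge (ltrans g A) (ltrans g B) = same_edge A B.
Proof. by move=> hA hB; rewrite /same_edge opp_ltrans !eq_ltrans ?valid_opp. Qed.

Lemma middist_ltrans g A B : valid A -> valid B ->
  middist (ltrans g A) (ltrans g B) = middist A B.
Proof.
move=> hA hB; rewrite /middist same_edge_ltrans // !init_ltrans !term_ltrans.
by rewrite !vdist_lmul ?valid_term.
Qed.

Lemma d2mv_ltrans g A v : valid A -> reduced v -> d2mv (ltrans g A) (lmul g v) = d2mv A v.
Proof. by move=> hA hv; rewrite /d2mv init_ltrans term_ltrans !vdist_lmul ?valid_term. Qed.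

Lemma on_geod_ltrans g A B v : valid A -> valid B -> reduced v ->
  on_geod (ltrans g A) (ltrans g B) (lmul g v) = on_geod A B v.
Proof. by move=> hA hB hv; rewrite /on_geod !d2mv_ltrans // middist_ltrans. Qed.

Lemma has_type_ltrans g d j A B : valid A -> valid B ->
  has_type d j (ltrans g A) (ltrans g B) = has_type d j A B.
Proof.
move=> hA hB; rewrite /has_type !valid_ltrans // hA hB middist_ltrans //.
rewrite opp_ltrans !eq_ltrans ?valid_opp // !init_ltrans !term_ltrans.
by rewrite !on_geod_ltrans ?valid_term.
Qed.

Definition translate (x : vert) (C : oedge) : oedge := foldr ltrans C x.

Lemma translateE x C : translate x C = (foldr lmul C.1 x, C.2).
Proof. by case: C => w h; elim: x => //= g x ->. Qed.

Lemma valid_translate x C : valid C -> valid (translate x C).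
Proof. by move=> hC; elim: x => //= g x; apply: valid_ltrans. Qed.

Lemma has_type_translate x d j A B : valid A -> valid B ->
  has_type d j (translate x A) (translate x B) = has_type d j A B.
Proof.
by move=> hA hB; elim: x => //= g x IH; rewrite has_type_ltrans ?valid_translate.
Qed.

Lemma translate_root B : translate (rev (init B)) B = ([::], B.2).
Proof. by rewrite translateE foldr_lmul_rev. Qed.

Lemma translate_edge_to x v c : translate x (edge_to v c) = edge_to (foldr lmul v x) c.
Proof. by rewrite translateE /= foldr_lmul_vmul. Qed.

(** * Types of pairs *)

Definition flip_type (j : nat) : nat :=
  match j with 1 => 2 | 2 => 1 | 3 => 4 | 4 => 3 | _ => 0 end.

Lemma middist_opp A B : valid B -> middist A (opp B) = middist A B.
Proof.
move=> hB; rewrite /middist /same_edge oppK // orbC term_opp //.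
by rewrite [minn (vdist (init A) _) _]minnC [minn (vdist (term A) _) _]minnC.
Qed.

Lemma d2mv_opp B v : valid B -> d2mv (opp B) v = d2mv B v.
Proof. by move=> hB; rewrite /d2mv term_opp // minnC. Qed.

Lemma on_geod_opp A B v : valid B -> on_geod A (opp B) v = on_geod A B v.
Proof. by move=> hB; rewrite /on_geod middist_opp // d2mv_opp. Qed.

Lemma has_type_flip d j A B : valid A -> valid B ->
  has_type d (flip_type j) A (opp B) = has_type d j A B.
Proof.
move=> hA hB; rewrite /has_type valid_opp // hA hB middist_opp // !on_geod_opp //.
rewrite term_opp // eq_opp // eq_opp_sym //.
by case: (d == 0); case: j => [|[|[|[|[|j]]]]].
Qed.

Lemma has_type_valid d j A B : has_type d j A B -> valid A /\ valid B.
Proof. by case/and4P. Qed.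

Lemma has_type_refl d j A : valid A ->
  has_type d j A A = (d == 0) && ((j == 1) || (j == 3)).
Proof.
move=> hA; rewrite /has_type hA /middist /same_edge eqxx /= [0 == d]eq_sym.
by case: (d == 0); rewrite // [A == _]eq_sym opp_neq //; case: j => [|[|[|[|[|j]]]]].
Qed.

Lemma has_type_opp_self d j A : valid A ->
  has_type d j A (opp A) = (d == 0) && ((j == 2) || (j == 4)).
Proof.
move=> hA; rewrite /has_type hA valid_opp // /middist /same_edge oppK // eqxx orbT.
rewrite /= [0 == d]eq_sym; case: (d == 0); rewrite // opp_neq // eqxx.
by case: j => [|[|[|[|[|j]]]]].
Qed.

Lemma has_type_eq d j A B : has_type d j A B -> (A == B) = (d == 0) && ((j == 1) || (j == 3)).
Proof.
move=> hAB; have [hA _] := has_type_valid hAB.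
case: (eqVneq A B) hAB => [<-|nAB]; first by rewrite has_type_refl // => ->.
rewrite /has_type; case: (d == 0) => //=.
by rewrite [B == A]eq_sym (negbTE nAB); case: j => [|[|[|[|[|j]]]]]; rewrite /= ?andbF.
Qed.

(** * Pairs whose second edge ends at the root *)

Definition rooted_edge (p : vert) (g : 'I_3) (inward : bool) : oedge :=
  if inward then (rcons p g, g) else (p, g).

Definition root_dist (p : vert) (g c : 'I_3) : nat :=
  if head g p == c then size p else (size p).+1.

Definition pair_type (A_toward B_toward : bool) : nat :=
  if A_toward then (if B_toward then 2 else 1) else (if B_toward then 3 else 4).

Lemma flip_pair_type a b : flip_type (pair_type a b) = pair_type a (~~ b).
Proof. by case: a; case: b. Qed.

Lemma exists_rooted_edge C : valid C ->
  exists p g inward, reduced (rcons p g) /\ C = rooted_edge p g inward.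
Proof.
case: C => w g /=; case/lastP: w => [|w a] hw; first by exists [::], g, false.
case: (eqVneq a g) => [<-|nag]; first by exists w, a, true.
by exists (rcons w a), g, false; rewrite reduced_rcons2 nag.
Qed.

Lemma valid_rooted_edge p g inward : reduced (rcons p g) -> valid (rooted_edge p g inward).
Proof. by case: inward => //; case/lastP: p => [|p a] // /[!reduced_rcons2] /andP[]. Qed.

Lemma term_rooted_edge p g inward : reduced (rcons p g) ->
  term (rooted_edge p g inward) = if inward then p else rcons p g.
Proof.
case: inward; first by rewrite /term vmul_rcons eqxx.
by case/lastP: p => [|p a] // /[!reduced_rcons2] /andP[/negbTE nag _]; rewrite /term vmul_rcons nag.
Qed.

Lemma init_rooted_edge p g inward :
  init (rooted_edge p g inward) = if inward then rcons p g else p.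
Proof. by case: inward. Qed.

Section RootFrame.

Variables (p : vert) (g c : 'I_3).
Hypothesis red_pg : reduced (rcons p g).
Hypothesis other_edge : (p != [::]) || (head g p != c).

Local Notation n := (size p).
Local Notation q := (rcons p g).

Let size_pos : head g p == c -> 0 < n.
Proof. by case: p other_edge => //=; case: eqP. Qed.

Let vdist_p0 : vdist p [::] = n. Proof. by rewrite vdistC vdist0. Qed.
Let vdist_q0 : vdist q [::] = n.+1. Proof. by rewrite vdistC vdist0 size_rcons. Qed.
Let vdist_pq : vdist p q = 1. Proof. by rewrite /vdist lcp_rcons size_rcons; lia. Qed.

Let vdist_pc : vdist p [:: c] = if head g p == c then n.-1 else n.+1.
Proof.
case: p other_edge => [|a u] /=; first by case: eqP.
by rewrite /vdist /= lcp0r => _; case: (a == c); rewrite /=; lia.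
Qed.

Let vdist_qc : vdist q [:: c] = if head g p == c then n else n.+2.
Proof.
by rewrite /vdist size_rcons; case: p => [|a u] /=; case: (_ == c); rewrite /= ?lcp0r; lia.
Qed.


Lemma same_edge_root inward : same_edge (rooted_edge p g inward) (edge_to [::] c) = false.
Proof.
apply/negbTE; rewrite /same_edge /opp term_edge_to // /rooted_edge /edge_to /=.
case: inward; rewrite !xpair_eqE; case: p other_edge red_pg => [|a [|b u]] /=.
all: rewrite ?vmul_nil ?eqseq_cons ?andbF ?orbF //=.
  by move=> /negbTE ->.
by case: (eqVneq a c) => [->|] //= _; rewrite andbT eq_sym => /negbTE ->.
Qed.

Local Notation A inward := (rooted_edge p g inward).
Local Notation E := (edge_to [::] c).

Ltac root_arith :=
  rewrite ?vdist_refl ?[vdist [:: c] _]vdistC ?vdist_p0 ?vdist_q0 ?vdist_pq ?vdist_pc ?vdist_qc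
    ?vdist0 ?size_rcons /root_dist;
  have [/size_pos ?|_] := boolP (head g p == c); rewrite /=.

Lemma middist_root inward : middist (A inward) E = root_dist p g c.
Proof.
rewrite /middist same_edge_root term_rooted_edge // init_rooted_edge term_edge_to //.
by case: inward; root_arith; rewrite /=; lia.
Qed.

Lemma d2mv_root inward v : d2mv (A inward) v = (2 * minn (vdist p v) (vdist q v)).+1.
Proof. by rewrite /d2mv term_rooted_edge // init_rooted_edge; case: inward; rewrite // minnC. Qed.

Lemma on_geod_root inward v : on_geod (A inward) E v =
  ((2 * minn (vdist p v) (vdist q v) + 2 * minn (vdist [:: c] v) (vdist [::] v)).+2
    == 2 * root_dist p g c).
Proof. by rewrite /on_geod d2mv_root middist_root /d2mv term_edge_to // addnS addSn. Qed.

Lemma has_type_rootE inward d j :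
  has_type d j (A inward) E = (d == root_dist p g c) && (j == pair_type inward (head g p != c)).
Proof.
have og_p b : on_geod (A b) E p by rewrite on_geod_root; root_arith; apply/eqP; lia.
have og_q b : on_geod (A b) E q = false.
  by rewrite on_geod_root; root_arith; apply/negbTE/eqP; lia.
have og_0 b : on_geod (A b) E [::] = (head g p != c).
  by rewrite on_geod_root; root_arith; [apply/negbTE/eqP | apply/eqP]; lia.
have og_c b : on_geod (A b) E [:: c] = (head g p == c).
  by rewrite on_geod_root; root_arith; [apply/eqP | apply/negbTE/eqP]; lia.
have root_dist_gt0 : (root_dist p g c == 0) = false.
  by rewrite /root_dist; have [/size_pos|] := boolP (head g p == c); case: (size p).
rewrite /has_type valid_rooted_edge // middist_root.
case: (eqVneq d (root_dist p g c)) => [->|] //; rewrite root_dist_gt0 /=.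
rewrite term_rooted_edge // init_rooted_edge term_edge_to // vmul_nil.
by case: inward; rewrite ?og_p ?og_q ?og_0 ?og_c; case: (head g p == c); case: j => [|[|[|[|[|j]]]]].
Qed.

End RootFrame.

Lemma has_type_root p g inward c : reduced (rcons p g) ->
  has_type (root_dist p g c) (pair_type inward (head g p != c))
    (rooted_edge p g inward) (edge_to [::] c).
Proof.
move=> hpg; have [/andP[/eqP p0 /eqP gc]|] := boolP ((p == [::]) && (head g p == c)).
  subst p; rewrite /= in gc; subst g; rewrite /root_dist /= eqxx; case: inward.
    by rewrite has_type_refl.
  by rewrite -[edge_to _ _]/(opp ([::], c)) has_type_opp_self.
by rewrite negb_and => other_edge; rewrite has_type_rootE // !eqxx.
Qed.

Lemma big_ord3_neq (x y : 'I_3) (F : bool -> nat) :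
  \sum_(c < 3 | c != x) F (y == c) = if y == x then F false + F false else F true + F false.
Proof.
rewrite big_mkcond !big_ord_recl big_ord0 /=.
case: x => [[|[|[|x]]] hx] //; case: y => [[|[|[|y]]] hy] //=;
  rewrite /bump /= ?addn0 ?add0n //; exact: addnC.
Qed.

Definition pred_types (d j : nat) : seq (nat * nat) :=
  if d is d'.+1 then
    if (j == 1) || (j == 4) then [:: (d', j); (d, flip_type j)] else nseq 2 (d.+1, j)
  else nseq 2 (1, if (j == 1) || (j == 3) then 3 else 2).

Lemma sum_root_pred_types (G : nat -> nat -> nat) p g inward x d j :
  reduced (rcons p g) -> has_type d j (rooted_edge p g inward) ([::], x) ->
  \sum_(c < 3 | c != x) G (root_dist p g c) (pair_type inward (head g p != c)) =
  \sum_(t <- pred_types d j) G t.1 t.2.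
Proof.
move=> hpg hAB.
rewrite (big_ord3_neq x (head g p)
  (fun b => G (if b then size p else (size p).+1) (pair_type inward (~~ b)))).
have [/andP[/eqP p0 /eqP gx]|] := boolP ((p == [::]) && (head g p == x)).
  subst p; rewrite /= in gx; subst g; move: hAB; rewrite /= eqxx; case: inward.
    have -> : ([::], x) = opp ([:: x], x) by rewrite /opp /term /vmul /= eqxx.
    rewrite has_type_opp_self // => /andP[/eqP -> ].
    by case: j => [|[|[|[|[|j]]]]] //= _; rewrite !big_cons big_nil addn0.
  rewrite has_type_refl // => /andP[/eqP -> ].
  by case: j => [|[|[|[|[|j]]]]] //= _; rewrite !big_cons big_nil addn0.
rewrite negb_and => other_edge.
move: hAB; rewrite -has_type_flip ?valid_rooted_edge // -[opp _]/(edge_to [::] x).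
rewrite has_type_rootE // => /andP[/eqP -> /eqP].
rewrite /root_dist; case: (boolP (head g p == x)) other_edge => /= hx; last first.
  by case: inward; case: j => [|[|[|[|[|j]]]]] //= _ _; rewrite !big_cons big_nil addn0.
case: p hpg hx => //= a p _ _ _.
by case: inward; case: j => [|[|[|[|[|j]]]]] //= _; rewrite !big_cons big_nil addn0.
Qed.

Lemma sum_pred_types (F : oedge -> nat) (G : nat -> nat -> nat) d j A B :
  has_type d j A B -> (forall d' j' C, has_type d' j' A C -> F C = G d' j') ->
  \sum_(c < 3 | c != B.2) F (edge_to (init B) c) = \sum_(t <- pred_types d j) G t.1 t.2.
Proof.
move=> hAB hFG; have [hA hB] := has_type_valid hAB.
have [p [g [inward [hpg hxA]]]] := exists_rooted_edge (valid_translate (rev (init B)) hA).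
have hroot : has_type d j (rooted_edge p g inward) ([::], B.2).
  by rewrite -hxA -translate_root has_type_translate.
rewrite -(sum_root_pred_types G hpg hroot).
apply: eq_bigr => c _; apply: (hFG (root_dist p g c) (pair_type inward (head g p != c))).
rewrite -(has_type_translate (rev (init B))) //; last exact: reduced_vmul.
by rewrite translate_edge_to foldr_lmul_rev hxA has_type_root.
Qed.

(** * Counting paths *)

Definition npathsz (k : nat) (r : int) (A B : oedge) : nat :=
  \sum_(t : k.-tuple 'I_3) ((last A (walk A t) == B) && (Posz (inversions (walk A t)) == r)).

Lemma npathsz_Posz k (n : nat) A B : npathsz k n A B = npaths k n A B.
Proof.
rewrite /npaths -sum1_card big_mkcond /=; apply: eq_bigr => t _.
by rewrite inE eqz_nat; case: ifP.
Qed.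

Lemma npathsz_Negz k (n : nat) A B : npathsz k (Negz n) A B = 0.
Proof. by apply: big1 => t _; rewrite andbF. Qed.

Lemma npathsz0 r A B : npathsz 0 r A B = (A == B) && (r == 0).
Proof.
rewrite /npathsz (big_pred1 [tuple]) => [|t]; first by rewrite /inversions /= [r == _]eq_sym.
by symmetry; apply/eqP; apply: tuple0.
Qed.

Lemma big_tuple_cons (T : finType) n (F : n.+1.-tuple T -> nat) :
  \sum_(t : n.+1.-tuple T) F t = \sum_(h : T) \sum_(t : n.-tuple T) F [tuple of h :: t].
Proof.
rewrite pair_bigA /= (reindex (fun p : T * n.-tuple T => [tuple of p.1 :: p.2])) //.
exists (fun t => (thead t, [tuple of behead t])) => [[h t] _ | t _] /=.
  by rewrite theadE; congr (_, _); apply: val_inj.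
by rewrite [in RHS](tuple_eta t).
Qed.

Lemma last_walk_cons A h t : last A (walk A (h :: t)) = last (term A, h) (walk (term A, h) t).
Proof. by case: t. Qed.

Lemma inversions_walk_cons A h t :
  inversions (walk A (h :: t)) = (h == A.2) + inversions (walk (term A, h) t).
Proof. by case: t => [|h' t]; rewrite /inversions /= /opp xpair_eqE eqxx. Qed.

(* Without [Posz], [r - (h == A.2)] would negate the boolean in the ring [bool]. *)
Lemma npathsz_first k r A B :
  npathsz k.+1 r A B = \sum_(h < 3) npathsz k (r - Posz (h == A.2)) (term A, h) B.
Proof.
rewrite /npathsz big_tuple_cons; apply: eq_bigr => h _; apply: eq_bigr => t _.
rewrite -[tval _]/(h :: t : seq _) last_walk_cons inversions_walk_cons; congr (_ && _).
by rewrite PoszD [in RHS]eq_sym subr_eq [in RHS]eq_sym addrC.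
Qed.

Lemma npathsz_last k r A B : valid A -> valid B ->
  npathsz k.+1 r A B = \sum_(c < 3) npathsz k (r - Posz (c == B.2)) A (edge_to (init B) c).
Proof.
elim: k r A => [|k IH] r A hA hB.
  rewrite npathsz_first; under eq_bigr do rewrite npathsz0.
  under [RHS]eq_bigr do rewrite npathsz0.
  case: A B hA hB => [a ga] [b gb] /= ha hb.
  rewrite (bigD1 gb) // big1 => [|h /negbTE nh]; last by rewrite xpair_eqE nh andbF.
  rewrite [in RHS](bigD1 ga) // big1 => [|c /negbTE nc]; last first.
    by rewrite /edge_to xpair_eqE [ga == c]eq_sym nc andbF.
  by rewrite /term /edge_to !xpair_eqE /= !eqxx vmul_eq // [gb == _]eq_sym.
rewrite npathsz_first (eq_bigr _ (fun h _ => IH _ (term A, h) (valid_term hA) hB)).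
rewrite exchange_big; apply: eq_bigr => c _; rewrite npathsz_first.
by apply: eq_bigr => h _; rewrite addrAC.
Qed.

Fixpoint Gamma_rec (k : nat) (r : int) (d j : nat) : nat :=
  if k is k'.+1 then
    Gamma_rec k' (r - 1)%R d (flip_type j) + \sum_(t <- pred_types d j) Gamma_rec k' r t.1 t.2
  else [&& r == 0, d == 0 & (j == 1) || (j == 3)].

Lemma npathsz_Gamma_rec k r d j A B : has_type d j A B -> npathsz k r A B = Gamma_rec k r d j.
Proof.
elim: k r d j A B => [|k IH] r d j A B hAB.
  by rewrite npathsz0 (has_type_eq hAB) andbC.
have [hA hB] := has_type_valid hAB.
rewrite npathsz_last // (bigD1 B.2) //= eqxx edge_to_init.
have hopp : has_type d (flip_type j) A (opp B) by rewrite has_type_flip.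
rewrite (IH _ _ _ _ _ hopp); congr (_ + _).
rewrite (eq_bigr (fun c => npathsz k r A (edge_to (init B) c))) => [|c /negbTE ->]; last first.
  by rewrite subr0.
by apply: (sum_pred_types (F := npathsz k r A) (G := Gamma_rec k r) hAB) => d' j' C; apply: IH.
Qed.

Fixpoint zigzag (n : nat) (a b : 'I_3) : vert := if n is m.+1 then a :: zigzag m b a else [::].

Lemma size_zigzag n a b : size (zigzag n a b) = n.
Proof. by elim: n a b => //= n IH a b; rewrite IH. Qed.

Lemma reduced_zigzag n a b : a != b -> reduced (zigzag n a b).
Proof.
elim: n a b => [|[|n] IH] a b hab //.
by rewrite [zigzag _ _ _]/= reduced_cons2 hab IH // eq_sym.
Qed.

Lemma exists_has_type d j : 0 < j < 5 -> exists A B, has_type d j A B.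
Proof.
case: d => [|n] hj.
  pose A : oedge := ([::], ord0); exists A, (if (j == 1) || (j == 3) then A else opp A).
  by case: j hj => [|[|[|[|[|j]]]]] //= _; rewrite ?has_type_refl ?has_type_opp_self.
pose a : 'I_3 := Ordinal (isT : 1 < 3); pose b : 'I_3 := Ordinal (isT : 2 < 3).
pose p := belast a (zigzag n b a); pose g := last a (zigzag n b a).
have hpg : reduced (rcons p g) by rewrite -lastI; exact: (@reduced_zigzag n.+1 a b).
have hhead : head g p = a by rewrite /p /g; case: (zigzag n b a).
have hsize : size p = n by rewrite size_belast size_zigzag.
have toward inward :
    has_type n.+1 (pair_type inward true) (rooted_edge p g inward) (edge_to [::] ord0).
  by have := has_type_root inward ord0 hpg; rewrite /root_dist hhead hsize.
have away inward :
    has_type n.+1 (pair_type inward false) (rooted_edge p g inward) (opp (edge_to [::] ord0)).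
  by rewrite -[false]/(~~ true) -flip_pair_type has_type_flip ?valid_rooted_edge.
case: j hj => [|[|[|[|[|j]]]]] // _; do 2 eexists.
- exact: away true.
- exact: toward true.
- exact: toward false.
- exact: away false.
Qed.

Lemma Gamma_rec_spec k r d j : 0 < j < 5 -> Gamma k r d j = Gamma_rec k r d j.
Proof.
move=> hj; have [A [B hAB]] := exists_has_type d hj.
rewrite /Gamma; set P := epsilon _ _.
have hP : has_type d j P.1 P.2.
  by apply: (epsilon_spec _ (fun p : oedge * oedge => has_type d j p.1 p.2)); exists (A, B).
case: r => n; first by rewrite -npathsz_Posz (npathsz_Gamma_rec _ _ hP).
by rewrite -(npathsz_Gamma_rec _ _ hP) npathsz_Negz.
Qed.

Theorem lemma2 (k : nat) (r : int) (d : nat) : (2 <= k)%N ->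
  ((1 <= d)%N ->
     [/\ Gamma k r d 1 = (Gamma k.-1 (r - 1)%R d 2 + Gamma k.-1 r d.-1 1 + Gamma k.-1 r d 2)%N,
         Gamma k r d 2 = (Gamma k.-1 (r - 1)%R d 1 + 2 * Gamma k.-1 r d.+1 2)%N,
         Gamma k r d 3 = (Gamma k.-1 (r - 1)%R d 4 + 2 * Gamma k.-1 r d.+1 3)%N &
         Gamma k r d 4 = (Gamma k.-1 (r - 1)%R d 3 + Gamma k.-1 r d.-1 4 + Gamma k.-1 r d 3)%N])
  /\
  [/\ Gamma k r 0 1 = (Gamma k.-1 (r - 1)%R 0 2 + 2 * Gamma k.-1 r 1 3)%N,
      Gamma k r 0 2 = (Gamma k.-1 (r - 1)%R 0 1 + 2 * Gamma k.-1 r 1 2)%N,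
      Gamma k r 0 3 = (Gamma k.-1 (r - 1)%R 0 4 + 2 * Gamma k.-1 r 1 3)%N &
      Gamma k r 0 4 = (Gamma k.-1 (r - 1)%R 0 3 + 2 * Gamma k.-1 r 1 2)%N].
Proof.
case: k => [|k] // _; rewrite !Gamma_rec_spec //= !big_cons big_nil /=.
split; last by split; lia.
by case: d => [|d] // _; rewrite /= !big_cons big_nil /=; split; lia.
Qed.
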